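(* For every cosieve $J\colon\mathbf{A}\to\mathbf{B}$ there is exactly one lens whose get functor is $J$, and this lens is a monomorphism in $\mathbf{Lens}$; conversely, the get functor of every monomorphism in $\mathbf{Lens}$ is a cosieve. Thus $U$ restricts to a bijection between monic lenses and cosieves.
   Context: A lens $F\colon \mathbf{A}\to\mathbf{B}$ between small categories consists of a functor $F\colon\mathbf{A}\to\mathbf{B}$ (the get functor) together with, for each object $A$ of $\mathbf{A}$, a function $\varphi_{F,A}$ from the set of morphisms of $\mathbf{B}$ with domain $FA$ to the set of morphisms of $\mathbf{A}$ with domain $A$, such that: $F(\varphi_{F,A}b)=b$; $\varphi_{F,A}(\mathrm{id}_{FA})=\mathrm{id}_A$; and $\varphi_{F,A}(b'\circ b)=\varphi_{F,A'}(b')\circ\varphi_{F,A}(b)$ whenever $b$ has domain $FA$, $A'$ is the codomain of $\varphi_{F,A}b$, and $b'$ has domain $FA'$. $\mathbf{Lens}$ is the category of small categories and lenses, with composite of $F\colon\mathbf{A}\to\mathbf{B}$, $G\colon\mathbf{B}\to\mathbf{C}$ having get functor $G\circ F$ and puts $\varphi_{G\circ F,A}(c)=\varphi_{F,A}(\varphi_{G,FA}(c))$. $U\colon\mathbf{Lens}\to\mathbf{Cat}$ sends a lens to its get functor. A functor $F\colon\mathbf{A}\to\mathbf{B}$ is a discrete opfibration if for each object $A$ of $\mathbf{A}$ and each morphism $b$ of $\mathbf{B}$ with domain $FA$ there is a unique morphism $a$ of $\mathbf{A}$ with domain $A$ and $Fa=b$. A cosieve is a discrete opfibration that is injective on objects.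 *)

From Stdlib Require Import ProofIrrelevance.
Set Implicit Arguments.

Record Category := {
  ob : Type;
  mor : Type;
  dom : mor -> ob;
  cod : mor -> ob;
  idm : ob -> mor;
  cmp : mor -> mor -> mor;  (* cmp g f = g o f, meaningful when cod f = dom g *)
  dom_idm : forall x, dom (idm x) = x;
  cod_idm : forall x, cod (idm x) = x;
  dom_cmp : forall f g, cod f = dom g -> dom (cmp g f) = dom f;
  cod_cmp : forall f g, cod f = dom g -> cod (cmp g f) = cod g;
  cmp_id_r : forall f, cmp f (idm (dom f)) = f;
  cmp_id_l : forall f, cmp (idm (cod f)) f = f;
  cmp_assoc : forall f g h, cod f = dom g -> cod g = dom h ->
      cmp h (cmp g f) = cmp (cmp h g) f
}.
Arguments dom {c} _.
Arguments cod {c} _.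
Arguments idm {c} _.
Arguments cmp {c} _ _.

Record Functor (A B : Category) := {
  fob : ob A -> ob B;
  fmor : mor A -> mor B;
  fdom : forall f, dom (fmor f) = fob (dom f);
  fcod : forall f, cod (fmor f) = fob (cod f);
  fidm : forall x, fmor (idm x) = idm (fob x);
  fcmp : forall f g, cod f = dom g -> fmor (cmp g f) = cmp (fmor g) (fmor f)
}.

Record Lens (A B : Category) := {
  get : Functor A B;
  put : forall x : ob A, {b : mor B | dom b = fob get x} -> mor A;
  put_dom : forall x b, dom (put x b) = x;
  put_get : forall x b, fmor get (put x b) = proj1_sig b;
  put_idm : forall x (h : dom (idm (fob get x)) = fob get x),
      put x (exist _ (idm (fob get x)) h) = idm x;
  put_cmp : forall x (b b' : mor B) (hb : dom b = fob get x)
      (hb' : dom b' = fob get (cod (put x (exist _ b hb))))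
      (hbb : dom (cmp b' b) = fob get x),
      put x (exist _ (cmp b' b) hbb)
      = cmp (put (cod (put x (exist _ b hb))) (exist _ b' hb'))
            (put x (exist _ b hb))
}.

Lemma put_irr A B (L : Lens A B) x1 x2 (b1 b2 : mor B)
  (h1 : dom b1 = fob (get L) x1) (h2 : dom b2 = fob (get L) x2) :
  x1 = x2 -> b1 = b2 -> put L x1 (exist _ b1 h1) = put L x2 (exist _ b2 h2).
Proof. intros -> ->. f_equal. f_equal. apply proof_irrelevance. Qed.

Definition functor_comp A B C (F : Functor A B) (G : Functor B C) : Functor A C.
Proof.
  refine {| fob := fun x => fob G (fob F x);
            fmor := fun f => fmor G (fmor F f) |}.
  - intros f. now rewrite fdom, fdom.
  - intros f. now rewrite fcod, fcod.
  - intros x. now rewrite fidm, fidm.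
  - intros f g h. rewrite fcmp by exact h. apply fcmp. now rewrite fcod, fdom, h.
Defined.

Definition lens_comp_put A B C (F : Lens A B) (G : Lens B C) (x : ob A)
  (c : {c : mor C | dom c = fob (functor_comp (get F) (get G)) x}) : mor A :=
  put F x (exist _ (put G (fob (get F) x) c) (put_dom G (fob (get F) x) c)).

Definition lens_comp A B C (F : Lens A B) (G : Lens B C) : Lens A C.
Proof.
  refine {| get := functor_comp (get F) (get G); put := @lens_comp_put A B C F G |}.
  - intros x c. unfold lens_comp_put. apply put_dom.
  - intros x c. unfold lens_comp_put. simpl. rewrite put_get. simpl. apply put_get.
  - intros x h. unfold lens_comp_put.
    assert (E : put G (fob (get F) x) (exist _ (idm (fob (get G) (fob (get F) x))) h)
                = idm (fob (get F) x)) by apply put_idm.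
    erewrite (put_irr F (x1:=x) (x2:=x) (b2:=idm (fob (get F) x)) _ (dom_idm _ _) eq_refl E).
    apply put_idm.
  - intros x c c' hc hc' hcc. unfold lens_comp_put in *. simpl in *.
    set (b := put G (fob (get F) x) (exist _ c hc)) in *.
    set (pd := put_dom G (fob (get F) x) (exist _ c hc)) in *.
    set (x1 := cod (put F x (exist _ b pd))) in *.
    assert (Ex1 : fob (get F) x1 = cod b).
    { unfold x1. rewrite <- fcod, put_get. reflexivity. }
    assert (h' : dom c' = fob (get G) (cod b)) by (rewrite hc', Ex1; reflexivity).
    assert (E1 : put G (fob (get F) x) (exist _ (cmp c' c) hcc)
                 = cmp (put G (cod b) (exist _ c' h')) b).
    { unfold b. apply (put_cmp G (fob (get F) x) c c' hc h' hcc). }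
    set (b' := put G (cod b) (exist _ c' h')) in *.
    assert (hdb' : dom b' = fob (get F) x1) by (unfold b'; rewrite put_dom; auto).
    assert (hbb : dom (cmp b' b) = fob (get F) x).
    { rewrite dom_cmp. apply pd. unfold b'. rewrite put_dom. reflexivity. }
    erewrite (put_irr F (x1:=x) (x2:=x) (b2:=cmp b' b) _ hbb eq_refl E1).
    rewrite (put_cmp F x b b' pd hdb' hbb).
    f_equal. apply put_irr; [reflexivity|].
    unfold b'. apply put_irr; auto.
Defined.

Definition lens_mono A B (L : Lens A B) : Prop :=
  forall (C : Category) (G H : Lens C A), lens_comp G L = lens_comp H L -> G = H.

Definition discrete_opfibration A B (F : Functor A B) : Prop :=
  forall (x : ob A) (b : mor B), dom b = fob F x ->
    exists a : mor A, (dom a = x /\ fmor F a = b) /\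
      forall a' : mor A, dom a' = x /\ fmor F a' = b -> a' = a.

Definition injective_on_objects A B (F : Functor A B) : Prop :=
  forall x y : ob A, fob F x = fob F y -> x = y.

Definition cosieve A B (F : Functor A B) : Prop :=
  discrete_opfibration F /\ injective_on_objects F.

(* A cosieve J is a discrete opfibration: every morphism out of [J x] has
   exactly one lift at [x].  So a lens over J can only put these unique lifts,
   and since J is injective on objects and on lifts with a common domain, it
   cancels on the right, both on get functors and on puts; hence the lens is
   monic.  Conversely, for a lens L with get J, the kernel pair of J (pairs of
   objects, resp. morphisms, with equal images under J) carries two projection
   lenses: the first puts [a] as [(a, put_L (J a))], the second symmetrically.
   Both composites with L put [b] as [(put_L b, put_L b)], so they agree.  If L
   is monic, the two projections are equal, which says precisely that J is
   injective on objects and that every lift of [b] at [x] is [put_L b]. *)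
From Stdlib Require Import ProofIrrelevance FunctionalExtensionality ClassicalEpsilon Bool.
Set Implicit Arguments.

Lemma sig_fun_eq {I T : Type} {P : (I -> T) -> Prop} (x y : sig P) :
  (forall i, proj1_sig x i = proj1_sig y i) -> x = y.
Proof.
  destruct x as [x hx], y as [y hy]; simpl; intros e.
  apply subset_eq_compat, functional_extensionality, e.
Qed.

Lemma functor_ext A B (F G : Functor A B) :
  (forall x, fob F x = fob G x) -> (forall f, fmor F f = fmor G f) -> F = G.
Proof.
  destruct F as [o m d c i p], G as [o' m' d' c' i' p']; simpl; intros eo em.
  assert (o = o') as <- by (apply functional_extensionality, eo).
  assert (m = m') as <- by (apply functional_extensionality, em).
  f_equal; apply proof_irrelevance.
Qed.

Lemma lens_ext A B {L K : Lens A B} : get L = get K ->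
  (forall x b h h', put L x (exist _ b h) = put K x (exist _ b h')) -> L = K.
Proof.
  destruct L as [g p d gp i c], K as [g' p' d' gp' i' c']; simpl; intros <- ep.
  assert (p = p') as <-.
  { apply functional_extensionality_dep; intros x.
    apply functional_extensionality; intros [b h]. apply ep. }
  f_equal; apply proof_irrelevance.
Qed.

Lemma put_congr A B (L K : Lens A B) x b h h' :
  L = K -> put L x (exist _ b h) = put K x (exist _ b h').
Proof. intros <-. apply put_irr; reflexivity. Qed.

Lemma put_idm_of_eq A B (L : Lens A B) x b (h : dom b = fob (get L) x) :
  b = idm (fob (get L) x) -> put L x (exist _ b h) = idm x.
Proof. intros ->. apply put_idm. Qed.

Lemma put_cmp_of_eq A B (L : Lens A B) x y (b b' c : mor B) (a : mor A) hb hb' hc :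
  a = put L x (exist _ b hb) -> y = cod a -> c = cmp b' b ->
  put L x (exist _ c hc) = cmp (put L y (exist _ b' hb')) a.
Proof. intros -> -> ->. apply put_cmp. Qed.

Section DiscreteOpfibration.
Variables (A B : Category) (J : Functor A B).
Hypothesis HJ : discrete_opfibration J.

Lemma opfib_lift_unique (a a' : mor A) :
  dom a = dom a' -> fmor J a = fmor J a' -> a = a'.
Proof.
  intros ed ef.
  destruct (HJ (dom a') (fmor J a') (fdom J a')) as [l [_ U]].
  transitivity l; [|symmetry]; apply U; auto.
Qed.

Definition opfib_lift x (s : {b : mor B | dom b = fob J x}) : mor A :=
  proj1_sig (constructive_indefinite_description _
    (HJ x (proj1_sig s) (proj2_sig s))).

Lemma opfib_lift_spec x s :
  dom (opfib_lift x s) = x /\ fmor J (opfib_lift x s) = proj1_sig s.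
Proof.
  unfold opfib_lift. destruct constructive_indefinite_description as [a Ha].
  exact (proj1 Ha).
Qed.

Definition opfib_lens : Lens A B.
Proof.
  refine {| get := J; put := opfib_lift |}.
  - intros x s. apply opfib_lift_spec.
  - intros x s. apply opfib_lift_spec.
  - intros x h. destruct (opfib_lift_spec x (exist _ _ h)) as [d f].
    apply opfib_lift_unique; simpl in *.
    + rewrite d, dom_idm. reflexivity.
    + rewrite f, fidm. reflexivity.
  - intros x b b' hb hb' hbb.
    destruct (opfib_lift_spec x (exist _ b hb)) as [d1 f1].
    destruct (opfib_lift_spec _ (exist _ b' hb')) as [d2 f2].
    destruct (opfib_lift_spec x (exist _ _ hbb)) as [d f].
    simpl in *. apply opfib_lift_unique.
    + rewrite d, dom_cmp; auto.
    + rewrite f, fcmp, f1, f2; auto.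
Defined.

End DiscreteOpfibration.

Lemma lens_eq_of_opfib A B (L K : Lens A B) :
  discrete_opfibration (get L) -> get L = get K -> L = K.
Proof.
  intros HL e. apply (lens_ext e). intros x b h h'.
  apply (opfib_lift_unique HL).
  - rewrite !put_dom. reflexivity.
  - transitivity b; [apply put_get|]. rewrite e. symmetry. apply put_get.
Qed.

Lemma cosieve_functor_cancel A B C (J : Functor A B) (F G : Functor C A) :
  cosieve J -> functor_comp F J = functor_comp G J -> F = G.
Proof.
  intros [HJ Hinj] e.
  assert (eo : forall x, fob F x = fob G x).
  { intros x. apply Hinj. exact (f_equal (fun H => fob H x) e). }
  apply functor_ext; [exact eo|]. intros f.
  apply (opfib_lift_unique HJ).
  - rewrite !fdom. apply eo.
  - exact (f_equal (fun H => fmor H f) e).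
Qed.

Lemma lens_comp_put_fmor A B C (G : Lens C A) (L : Lens A B) x a
  (ha : dom a = fob (get G) x)
  (h : dom (fmor (get L) a) = fob (get L) (fob (get G) x)) :
  discrete_opfibration (get L) ->
  put (lens_comp G L) x (exist _ (fmor (get L) a) h) = put G x (exist _ a ha).
Proof.
  intros HL. simpl. unfold lens_comp_put. apply put_irr; [reflexivity|].
  apply (opfib_lift_unique HL).
  - rewrite put_dom. symmetry. exact ha.
  - apply put_get.
Qed.

Lemma cosieve_lens_mono A B (L : Lens A B) : cosieve (get L) -> lens_mono L.
Proof.
  intros HL C G H e.
  assert (eg : get G = get H).
  { apply (cosieve_functor_cancel HL). exact (f_equal (@get _ _) e). }
  apply (lens_ext eg). intros x a h h'.
  assert (hG : dom (fmor (get L) a) = fob (get L) (fob (get G) x))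
    by (rewrite fdom, h; reflexivity).
  assert (hH : dom (fmor (get L) a) = fob (get L) (fob (get H) x))
    by (rewrite fdom, h'; reflexivity).
  rewrite <- (lens_comp_put_fmor G L x a h hG (proj1 HL)),
          <- (lens_comp_put_fmor H L x a h' hH (proj1 HL)).
  apply put_congr, e.
Qed.

Lemma if_bool_congr {T U : Type} (f : T -> U) (u v : T) :
  f u = f v -> forall i j : bool, f (if i then u else v) = f (if j then u else v).
Proof. intros e [|] [|]; simpl; congruence. Qed.

Section KernelPair.
Variables (A B : Category) (J : Functor A B).

(* A pair is encoded as a [bool]-indexed family, so that both projections and
   their lens structures are a single definition. *)
Definition kp_ob := {x : bool -> ob A | forall i j, fob J (x i) = fob J (x j)}.
Definition kp_mor := {m : bool -> mor A | forall i j, fmor J (m i) = fmor J (m j)}.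

Definition kp_pair_ob {x y : ob A} (e : fob J x = fob J y) : kp_ob :=
  exist _ (fun i : bool => if i then x else y) (if_bool_congr (fob J) x y e).

Definition kp_pair_mor {a a' : mor A} (e : fmor J a = fmor J a') : kp_mor :=
  exist _ (fun i : bool => if i then a else a') (if_bool_congr (fmor J) a a' e).

Definition kp_dom (m : kp_mor) : kp_ob.
Proof.
  exists (fun i => dom (proj1_sig m i)). intros i j.
  rewrite <- !fdom, (proj2_sig m i j). reflexivity.
Defined.

Definition kp_cod (m : kp_mor) : kp_ob.
Proof.
  exists (fun i => cod (proj1_sig m i)). intros i j.
  rewrite <- !fcod, (proj2_sig m i j). reflexivity.
Defined.

Definition kp_idm (x : kp_ob) : kp_mor.
Proof.
  exists (fun i => idm (proj1_sig x i)). intros i j.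
  rewrite !fidm, (proj2_sig x i j). reflexivity.
Defined.

(* For non-composable pairs the componentwise composite may leave the kernel
   pair; the value is then junk. *)
Definition kp_cmp (g f : kp_mor) : kp_mor :=
  match excluded_middle_informative (forall i j,
    fmor J (cmp (proj1_sig g i) (proj1_sig f i))
    = fmor J (cmp (proj1_sig g j) (proj1_sig f j))) with
  | left h => exist _ (fun i => cmp (proj1_sig g i) (proj1_sig f i)) h
  | right _ => f
  end.

Lemma kp_cmp_val (g f : kp_mor) :
  (forall i, cod (proj1_sig f i) = dom (proj1_sig g i)) ->
  proj1_sig (kp_cmp g f) = fun i => cmp (proj1_sig g i) (proj1_sig f i).
Proof.
  intros c. unfold kp_cmp.
  destruct excluded_middle_informative as [h|n]; [reflexivity|].
  exfalso. apply n. intros i j.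
  rewrite !fcmp by apply c. rewrite (proj2_sig g i j), (proj2_sig f i j).
  reflexivity.
Qed.

Lemma kp_composable (f g : kp_mor) :
  kp_cod f = kp_dom g -> forall i, cod (proj1_sig f i) = dom (proj1_sig g i).
Proof. intros e i. exact (f_equal (fun x => proj1_sig x i) e). Qed.

Definition kernel_pair : Category.
Proof.
  refine {| ob := kp_ob; mor := kp_mor; dom := kp_dom; cod := kp_cod;
            idm := kp_idm; cmp := kp_cmp |}.
  - intros x. apply sig_fun_eq. intros i. apply dom_idm.
  - intros x. apply sig_fun_eq. intros i. apply cod_idm.
  - intros f g e. apply sig_fun_eq. intros i. simpl.
    rewrite kp_cmp_val by exact (kp_composable e). apply dom_cmp, (kp_composable e).
  - intros f g e. apply sig_fun_eq. intros i. simpl.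
    rewrite kp_cmp_val by exact (kp_composable e). apply cod_cmp, (kp_composable e).
  - intros f. apply sig_fun_eq. intros i.
    rewrite kp_cmp_val by (intros j; apply cod_idm). apply cmp_id_r.
  - intros f. apply sig_fun_eq. intros i.
    rewrite kp_cmp_val by (intros j; symmetry; apply dom_idm). apply cmp_id_l.
  - intros f g h e1 e2.
    pose proof (kp_composable e1) as c1. pose proof (kp_composable e2) as c2.
    assert (c3 : forall j, cod (proj1_sig (kp_cmp g f) j) = dom (proj1_sig h j)).
    { intros j. rewrite kp_cmp_val, cod_cmp by auto. apply c2. }
    assert (c4 : forall j, cod (proj1_sig f j) = dom (proj1_sig (kp_cmp h g) j)).
    { intros j. rewrite kp_cmp_val, dom_cmp by auto. apply c1. }
    apply sig_fun_eq. intros i.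
    rewrite (kp_cmp_val _ _ c3), (kp_cmp_val _ _ c4),
            (kp_cmp_val _ _ c1), (kp_cmp_val _ _ c2).
    apply cmp_assoc; auto.
Defined.

Definition kp_proj (i : bool) : Functor kernel_pair A.
Proof.
  refine {| fob := fun x : ob kernel_pair => proj1_sig x i;
            fmor := fun m : mor kernel_pair => proj1_sig m i |}; try reflexivity.
  intros f g e. simpl. rewrite kp_cmp_val by exact (kp_composable e). reflexivity.
Defined.

End KernelPair.

Section KernelPairLens.
Variables (A B : Category) (L : Lens A B).
Notation J := (get L).

Lemma fibre_dom (x : kp_ob J) i j (a : mor A) :
  dom a = proj1_sig x i -> dom (fmor J a) = fob J (proj1_sig x j).
Proof. intros ha. rewrite fdom, ha. apply (proj2_sig x). Qed.

Definition kp_lift i (x : kp_ob J) (s : {a : mor A | dom a = proj1_sig x i})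
  (j : bool) : mor A :=
  if bool_dec i j then proj1_sig s
  else put L (proj1_sig x j)
         (exist _ (fmor J (proj1_sig s)) (fibre_dom x i j _ (proj2_sig s))).

Lemma kp_lift_self i x s : kp_lift i x s i = proj1_sig s.
Proof. unfold kp_lift. destruct bool_dec as [_|n]; [reflexivity | contradiction]. Qed.

Lemma kp_lift_other i x s j (n : i <> j) :
  kp_lift i x s j
  = put L (proj1_sig x j)
      (exist _ (fmor J (proj1_sig s)) (fibre_dom x i j _ (proj2_sig s))).
Proof. unfold kp_lift. destruct bool_dec; [contradiction | reflexivity]. Qed.

Lemma fmor_kp_lift i x s j : fmor J (kp_lift i x s j) = fmor J (proj1_sig s).
Proof. unfold kp_lift. destruct bool_dec; [reflexivity | apply put_get]. Qed.

Lemma dom_kp_lift i x s j : dom (kp_lift i x s j) = proj1_sig x j.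
Proof.
  unfold kp_lift. destruct bool_dec as [<-|_]; [exact (proj2_sig s) | apply put_dom].
Qed.

Definition kp_put i (x : kp_ob J) (s : {a : mor A | dom a = proj1_sig x i}) : kp_mor J :=
  exist (fun m => forall j k, fmor J (m j) = fmor J (m k)) (kp_lift i x s)
    (fun j k => eq_trans (fmor_kp_lift i x s j) (eq_sym (fmor_kp_lift i x s k))).

Definition kp_proj_lens (i : bool) : Lens (kernel_pair J) A.
Proof.
  refine {| get := kp_proj J i; put := kp_put i |}.
  - intros x s. apply sig_fun_eq. apply dom_kp_lift.
  - intros x s. apply kp_lift_self.
  - intros x h. apply sig_fun_eq. intros j. simpl.
    destruct (bool_dec i j) as [<-|n]; [apply kp_lift_self|].
    rewrite kp_lift_other by exact n.
    apply put_idm_of_eq. simpl. rewrite fidm. apply f_equal, (proj2_sig x).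
  - intros x b b' hb hb' hbb. apply sig_fun_eq. intros j. simpl.
    rewrite kp_cmp_val by (intros k; symmetry; apply dom_kp_lift).
    destruct (bool_dec i j) as [<-|n].
    + simpl. rewrite kp_lift_self. simpl. f_equal; symmetry; apply kp_lift_self.
    + cbn [proj1_sig kp_put].
      rewrite !kp_lift_other by exact n.
      eapply put_cmp_of_eq; [apply kp_lift_other, n | reflexivity |].
      apply fcmp. simpl. rewrite hb'. simpl. rewrite kp_lift_self. reflexivity.
Defined.

Lemma kp_proj_lens_comp_put i x c h j (h' : dom c = fob J (proj1_sig x j)) :
  proj1_sig (put (lens_comp (kp_proj_lens i) L) x (exist _ c h)) j
  = put L (proj1_sig x j) (exist _ c h').
Proof.
  simpl. unfold lens_comp_put; simpl.
  destruct (bool_dec i j) as [<-|n].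
  - rewrite kp_lift_self. apply put_irr; reflexivity.
  - rewrite kp_lift_other by exact n. apply put_irr; [reflexivity | apply put_get].
Qed.

Lemma kp_proj_lens_comp_eq :
  lens_comp (kp_proj_lens true) L = lens_comp (kp_proj_lens false) L.
Proof.
  apply lens_ext.
  - apply functor_ext.
    + intros x. apply (proj2_sig x).
    + intros m. apply (proj2_sig m).
  - intros x c h h'. apply sig_fun_eq. intros j.
    pose proof (eq_trans h (proj2_sig x true j)) as hj.
    rewrite (kp_proj_lens_comp_put true x h j hj),
            (kp_proj_lens_comp_put false x h' j hj).
    reflexivity.
Qed.

End KernelPairLens.

Lemma lens_mono_cosieve A B (L : Lens A B) : lens_mono L -> cosieve (get L).
Proof.
  intros HL.
  pose proof (f_equal (@get _ _) (HL _ _ _ (kp_proj_lens_comp_eq L))) as e.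
  simpl in e. split.
  - intros x b h. exists (put L x (exist _ b h)).
    split; [split; [apply put_dom | apply put_get]|].
    intros a [ha ea].
    assert (ef : fmor (get L) a = fmor (get L) (put L x (exist _ b h)))
      by (rewrite put_get; exact ea).
    exact (f_equal (fun F : Functor (kernel_pair (get L)) A =>
                      fmor F (kp_pair_mor (get L) ef)) e).
  - intros x y exy.
    exact (f_equal (fun F : Functor (kernel_pair (get L)) A =>
                      fob F (kp_pair_ob (get L) exy)) e).
Qed.

Theorem corollary3p3 :
  (forall (A B : Category) (J : Functor A B), cosieve J ->
     (exists L : Lens A B, get L = J) /\
     (forall L1 L2 : Lens A B, get L1 = J -> get L2 = J -> L1 = L2) /\
     (forall L : Lens A B, get L = J -> lens_mono L)) /\
  (forall (A B : Category) (L : Lens A B), lens_mono L -> cosieve (get L)).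
Proof.
  split; [|exact lens_mono_cosieve].
  intros A B J HJ. split; [|split].
  - exists (opfib_lens (proj1 HJ)). reflexivity.
  - intros L1 L2 e1 e2. subst J.
    apply lens_eq_of_opfib; [exact (proj1 HJ) | symmetry; exact e2].
  - intros L e. subst J. apply cosieve_lens_mono, HJ.
Qed.
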